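(* Let $d\ge2$, $\gamma^\mu\in\mathbb{S}^d$ with zero diagonal and $\gamma^\mu_{ij}>0$ for all $i\ne j$, and let $b^\mu_i(\mu)=\beta^\mu_i+\sum_jB^\mu_{ij}\mu^j$ with $(\beta^\mu,B^\mu,\gamma^\mu)$ an admissible simplex parameter set. Let $J\subseteq\{1,\dots,d\}$ be the set of indices $j$ for which $b^\mu_j=0$ on $\{\mu\in\Delta^d:\mu^j=0\}$, and $E=\{\mu\in\Delta^d:\mu^j>0\text{ for all }j\notin J\}$. Then there exists a function $\widetilde{\lambda}:E\to\mathbb{R}^{d-1}$ such that $\widetilde{b}^\mu=\widetilde{c}^\mu\widetilde{\lambda}(\mu)$ for all $\mu\in E$.
   Context: $\Delta^d$ is the unit simplex. For $\mu\in\Delta^d$, $c^\mu\in\mathbb{S}^d$ is given by $c^\mu_{ii}=\sum_{j\ne i}\gamma^\mu_{ij}\mu^i\mu^j$, $c^\mu_{ij}=-\gamma^\mu_{ij}\mu^i\mu^j$ ($i\ne j$); $\widetilde{c}^\mu$ is $c^\mu$ with the $d$-th row and column deleted and $\widetilde{b}^\mu$ is $b^\mu$ with the $d$-th entry deleted. An admissible simplex parameter set is $(\beta^\mu,B^\mu,\gamma^\mu)$ with $\gamma^\mu$ having nonnegative off-diagonal and zero diagonal entries, $(B^\mu)^\top\mathbf{1}+((\beta^\mu)^\top\mathbf{1})\mathbf{1}=0$, $\beta^\mu_i+B^\mu_{ij}\ge0$ for $i\ne j$. *)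

From HB Require Import structures.
From mathcomp Require Import all_boot all_order all_algebra.
Set Implicit Arguments. Unset Strict Implicit. Unset Printing Implicit Defensive.
Import Order.TTheory GRing.Theory Num.Theory.
Local Open Scope ring_scope.

Section Simplex.
Variables (R : realFieldType) (d : nat).

Definition in_simplex (mu : 'I_d -> R) : Prop :=
  (forall i, 0 <= mu i) /\ \sum_(i < d) mu i = 1.

Definition bvec (beta : 'cV[R]_d) (B : 'M[R]_d) (mu : 'I_d -> R) : 'cV[R]_d :=
  \col_i (beta i 0 + \sum_(j < d) B i j * mu j).

Definition cmat (gamma : 'M[R]_d) (mu : 'I_d -> R) : 'M[R]_d :=
  \matrix_(i, j) (if i == j then \sum_(k < d | k != i) gamma i k * mu i * mu k
                  else - (gamma i j * mu i * mu j)).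

Definition admissible (beta : 'cV[R]_d) (B gamma : 'M[R]_d) : Prop :=
  [/\ (forall i j, i != j -> 0 <= gamma i j),
      (forall i, gamma i i = 0),
      (forall j : 'I_d, \sum_(i < d) B i j + \sum_(i < d) beta i 0 = 0) &
      (forall i j, i != j -> 0 <= beta i 0 + B i j)].

Definition Jset (beta : 'cV[R]_d) (B : 'M[R]_d) (j : 'I_d) : Prop :=
  forall mu, in_simplex mu -> mu j = 0 -> bvec beta B mu j 0 = 0.

Definition Eset (beta : 'cV[R]_d) (B : 'M[R]_d) (mu : 'I_d -> R) : Prop :=
  in_simplex mu /\ (forall j, ~ Jset beta B j -> 0 < mu j).

Definition wd (i : 'I_d.-1) : 'I_d := widen_ord (leq_pred d) i.

Definition vtilde (v : 'cV[R]_d) : 'cV[R]_(d.-1) := \col_i v (wd i) 0.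
Definition mtilde (M : 'M[R]_d) : 'M[R]_(d.-1) := \matrix_(i, j) M (wd i) (wd j).

End Simplex.

(* The matrix c^mu is the weighted graph Laplacian with edge weights
   w_ik = gamma_ik mu^i mu^k, so y^T c^mu y = 1/2 sum_ik w_ik (y_i - y_k)^2.
   Since c~ is symmetric, b~ lies in its range iff b~ is orthogonal to its
   kernel.  Extending x in ker c~ by a zero d-th entry gives y with
   y^T c^mu y = 0, hence y is constant, say = y_p, on the support of mu.
   Off the support mu^k = 0, and k is in J by definition of E, so b_k = 0.
   Thus b.y = (sum_k b_k) y_p, and sum_k b_k = 0 on the simplex by the
   column condition on (beta, B). *)

From Stdlib Require Import Classical.
From mathcomp Require Import all_boot all_order all_algebra.
From mathcomp Require Import ring.

Set Implicit Arguments.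
Unset Strict Implicit.
Unset Printing Implicit Defensive.
Import Order.TTheory GRing.Theory Num.Theory.
Local Open Scope ring_scope.

Section Laplacian.
Variables (R : realFieldType) (T : finType) (w : T -> T -> R).
Hypothesis w_sym : forall i k, w i k = w k i.

Lemma laplacian_formE (y : T -> R) :
  (\sum_i y i * \sum_k w i k * (y i - y k)) *+ 2
  = \sum_i \sum_k w i k * (y i - y k) ^+ 2.
Proof.
have swap : \sum_i y i * \sum_k w i k * (y i - y k)
            = \sum_i \sum_k w i k * - y k * (y i - y k).
  transitivity (\sum_k \sum_i w k i * y k * (y k - y i)).
    by apply: eq_bigr => i _; rewrite mulr_sumr; apply: eq_bigr => k _; ring.
  rewrite exchange_big; apply: eq_bigr => i _; apply: eq_bigr => k _.
  by rewrite w_sym; ring.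
rewrite mulr2n {2}swap -big_split; apply: eq_bigr => i _.
by rewrite mulr_sumr -big_split; apply: eq_bigr => k _ /=; ring.
Qed.

Hypothesis w_ge0 : forall i k, i != k -> 0 <= w i k.

Lemma laplacian_form_eq0 (y : T -> R) :
  \sum_i y i * \sum_k w i k * (y i - y k) = 0 ->
  forall i k, w i k * (y i - y k) ^+ 2 = 0.
Proof.
move=> form0 i k.
have term_ge0 j l : 0 <= w j l * (y j - y l) ^+ 2.
  case: (eqVneq j l) => [->|jl]; first by rewrite subrr expr2 !mulr0.
  by rewrite mulr_ge0 ?w_ge0 ?sqr_ge0.
have total0 : \sum_i \sum_k w i k * (y i - y k) ^+ 2 = 0.
  by rewrite -laplacian_formE form0 mul0rn.
have row_ge0 j : 0 <= \sum_k w j k * (y j - y k) ^+ 2 by rewrite sumr_ge0.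
have row0 := @psumr_eq0P _ _ xpredT _ (fun j _ => row_ge0 j) total0 i isT.
exact: (@psumr_eq0P _ _ xpredT _ (fun l _ => term_ge0 i l) row0 k isT).
Qed.

End Laplacian.

Lemma mulmx_pinv_orth_ker (F : fieldType) m n (A : 'M[F]_(m, n)) (v : 'cV[F]_m) :
  (forall x : 'cV_m, A^T *m x = 0 -> v^T *m x = 0) ->
  A *m (v^T *m pinvmx A^T)^T = v.
Proof.
move=> orth; have sub : (v^T <= A^T)%MS.
  rewrite submxE; apply/eqP/matrixP => a j.
  have Kj : A^T *m (cokermx A^T *m delta_mx j 0) = 0 :> 'cV_n.
    by rewrite mulmxA mulmx_coker mul0mx.
  have /matrixP/(_ a 0) := orth _ Kj.
  by rewrite mulmxA -colE !mxE.
by apply: trmx_inj; rewrite trmx_mul trmxK mulmxKpV.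
Qed.

Section Truncation.
Variables (R : realFieldType) (d : nat).

Definition embed_mx : 'M[R]_(d, d.-1) := colsub (@wd d) 1%:M.

Lemma vtildeE (v : 'cV[R]_d) : vtilde v = embed_mx^T *m v.
Proof.
rewrite trmx_mxsub trmx1 -rowsubE.
by apply/matrixP => i j; rewrite !mxE (ord1 j).
Qed.

Lemma mtildeE (M : 'M[R]_d) : mtilde M = embed_mx^T *m M *m embed_mx.
Proof.
rewrite trmx_mxsub trmx1 -rowsubE mulmx_colsub mulmx1.
by apply/matrixP => i j; rewrite !mxE.
Qed.

End Truncation.

Section CovarianceMatrix.
Variables (R : realFieldType) (d : nat) (gamma : 'M[R]_d) (mu : 'I_d -> R).

Lemma cmat_mulE (y : 'cV[R]_d) i :
  (cmat gamma mu *m y) i 0 = \sum_k gamma i k * mu i * mu k * (y i 0 - y k 0).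
Proof.
rewrite mxE (bigD1 i) //= [RHS](bigD1 i) //= subrr mulr0 add0r mxE eqxx.
rewrite mulr_suml -big_split /=; apply: eq_bigr => k ki.
by rewrite mxE eq_sym (negbTE ki); ring.
Qed.

Hypothesis gamma_sym : gamma^T = gamma.

Lemma cmat_tr : (cmat gamma mu)^T = cmat gamma mu.
Proof.
apply/matrixP => i k; rewrite !mxE eq_sym; case: eqP => [->|_] //.
by rewrite -[in LHS]gamma_sym mxE; ring.
Qed.

Hypothesis gamma_gt0 : forall i k, i != k -> 0 < gamma i k.
Hypothesis mu_ge0 : forall i, 0 <= mu i.

Lemma cmat_form_eq0 (y : 'cV[R]_d) :
  y^T *m cmat gamma mu *m y = 0 ->
  forall i k, 0 < mu i -> 0 < mu k -> y i 0 = y k 0.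
Proof.
move=> form0 i k mu_i mu_k.
pose w i k := gamma i k * mu i * mu k.
have w_sym j l : w j l = w l j by rewrite /w -[in LHS]gamma_sym mxE; ring.
have w_ge0 j l : j != l -> 0 <= w j l.
  by move=> /gamma_gt0/ltW g_ge0; rewrite !mulr_ge0.
have lap0 : \sum_j y j 0 * \sum_l w j l * (y j 0 - y l 0) = 0.
  have /matrixP/(_ 0 0) := form0; rewrite -mulmxA mxE [RHS]mxE => lhs0.
  by apply: etrans lhs0; apply: eq_bigr => j _; rewrite mxE cmat_mulE.
have [->//|ik] := eqVneq i k.
move: (laplacian_form_eq0 w_sym w_ge0 lap0 i k) => /eqP.
rewrite !mulf_eq0 (gt_eqF (gamma_gt0 ik)) (gt_eqF mu_i) (gt_eqF mu_k) subr_eq0 /= orbb.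
by move/eqP.
Qed.

End CovarianceMatrix.

Section Drift.
Variables (R : realFieldType) (d : nat) (beta : 'cV[R]_d) (B : 'M[R]_d).
Hypothesis col_sum : forall j, \sum_i B i j + \sum_i beta i 0 = 0.

Lemma bvec_sum_eq0 (mu : 'I_d -> R) :
  \sum_i mu i = 1 -> \sum_i bvec beta B mu i 0 = 0.
Proof.
move=> mu1; under eq_bigr do rewrite mxE.
rewrite big_split /= exchange_big /=.
have colB j : \sum_i B i j = - \sum_i beta i 0 by apply/eqP; rewrite -addr_eq0 col_sum.
transitivity (\sum_i beta i 0 + \sum_j (- \sum_i beta i 0) * mu j).
  by congr (_ + _); apply: eq_bigr => j _; rewrite -mulr_suml colB.
by rewrite -mulr_sumr mu1 mulr1 subrr.
Qed.

Lemma simplex_exists_pos (mu : 'I_d -> R) : in_simplex mu -> exists p, 0 < mu p.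
Proof.
case=> mu_ge0 mu1; have [/existsP//|/existsPn no_pos] := boolP [exists p, 0 < mu p].
have : \sum_i mu i = 0.
  by apply: big1 => p _; apply/eqP; rewrite eq_le mu_ge0 andbT leNgt no_pos.
by rewrite mu1 => /eqP; rewrite oner_eq0.
Qed.

Lemma Eset_bvec_eq0 mu k : Eset beta B mu -> mu k = 0 -> bvec beta B mu k 0 = 0.
Proof.
case=> simplex_mu pos muk0.
have J_k : Jset beta B k.
  apply: (NNPP (Jset beta B k)) => notJ.
  by move: (pos k notJ); rewrite muk0 ltxx.
exact: J_k simplex_mu muk0.
Qed.

Lemma bvec_orth_support_const mu (y : 'cV[R]_d) :
  Eset beta B mu -> (forall i k, 0 < mu i -> 0 < mu k -> y i 0 = y k 0) ->
  (bvec beta B mu)^T *m y = 0.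
Proof.
move=> Emu y_const; have [[mu_ge0 mu1] _] := Emu.
have [p mu_p] := simplex_exists_pos (Emu.1).
apply/matrixP => a b; rewrite [a]ord1 [b]ord1 !mxE.
transitivity (\sum_k bvec beta B mu k 0 * y p 0); last first.
  by rewrite -mulr_suml (bvec_sum_eq0 mu1) mul0r.
apply: eq_bigr => k _; rewrite mxE; have [mu_k|] := boolP (0 < mu k).
  by rewrite (y_const k p).
rewrite lt_neqAle mu_ge0 andbT negbK eq_sym => /eqP muk0.
by rewrite Eset_bvec_eq0 ?mul0r.
Qed.

End Drift.

Theorem mainTheorem16 (R : realFieldType) (d : nat) (hd : (2 <= d)%N)
  (beta : 'cV[R]_d) (B gamma : 'M[R]_d)
  (hsym : gamma^T = gamma)
  (hdiag : forall i, gamma i i = 0)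
  (hpos : forall i j, i != j -> 0 < gamma i j)
  (hadm : admissible beta B gamma) :
  exists lam : ('I_d -> R) -> 'cV[R]_(d.-1),
    forall mu, Eset beta B mu ->
      vtilde (bvec beta B mu) = mtilde (cmat gamma mu) *m lam mu.
Proof.
case: hadm => _ _ col_sum _.
exists (fun mu => ((vtilde (bvec beta B mu))^T *m pinvmx (mtilde (cmat gamma mu))^T)^T).
move=> mu Emu; apply/esym/mulmx_pinv_orth_ker => x.
rewrite mtildeE vtildeE; set P := embed_mx R d; set C := cmat gamma mu => Cx.
have form0 : (P *m x)^T *m C *m (P *m x) = 0.
  have C_sym : (P^T *m C *m P)^T = P^T *m C *m P.
    by rewrite !trmx_mul trmxK cmat_tr // mulmxA.
  have -> : (P *m x)^T *m C *m (P *m x) = x^T *m ((P^T *m C *m P)^T *m x).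
    by rewrite C_sym trmx_mul !mulmxA.
  by rewrite Cx mulmx0.
have [[mu_ge0 _] _] := Emu.
rewrite trmx_mul trmxK -mulmxA.
apply: bvec_orth_support_const => // i k mu_i mu_k.
exact: (cmat_form_eq0 hsym hpos mu_ge0 form0 mu_i mu_k).
Qed.
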